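(* Let $(M,g,J)$ be almost Hermitian of even complex dimension $m=2n$, $n\ge1$, with a complex spinor bundle $S^cM$ of a spin$^c$ structure. Set $$\alpha_1=\sqrt{\tfrac{m-1}{m+1}},\ \ \beta_1=m+1-(m+2)\alpha_1,\ \ \alpha_2=\sqrt{\tfrac{m+1}{m-1}},\ \ \beta_2=m+1-m\alpha_2,$$ $$\mathfrak{T}_X=\mathbf{i}\big(\alpha_1X^{1,0}\cdot\pi_{n-1}+\alpha_2X^{0,1}\cdot\pi_n+\beta_1X^{1,0}\cdot\pi_{n-2}+\beta_2X^{0,1}\cdot\pi_{n+1}\big),$$ $$\mathcal{T}=-\mathbf{i}(m+1)+\mathbf{i}\beta_1\pi_{n-1}+\mathbf{i}\beta_2\pi_n.$$ Then for every vector field $X$ the endomorphism $\mathfrak{T}_X+\gamma(X)\mathcal{T}$ of $S^cM$ is selfadjoint, and for any orthonormal frame $e_1,\dots,e_{2m}$, $$\mathcal{T}':=\sum_{j=1}^{2m}e_j\cdot\mathfrak{T}_{e_j}=\mathcal{T}\circ\mathrm{pr}_{\mathcal{V}}-\mathbf{i}\beta_1(m+4)\pi_{n-2}-\mathbf{i}\beta_2(m+2)\pi_{n+1}.$$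
   Context: $\Omega=g(\cdot,J\cdot)$; Clifford multiplication is $\gamma$ or $\cdot$; $S^cM=S_0\oplus\cdots\oplus S_m$ with $S_j$ the eigenbundle of $\gamma(\Omega)$ for eigenvalue $\mathbf{i}(m-2j)$ and orthogonal projections $\pi_j$ ($\pi_j=0$ if $j\notin\{0,\dots,m\}$). $X^{1,0}=\frac12(X-\mathbf{i}JX)$, $X^{0,1}=\frac12(X+\mathbf{i}JX)$. $\mathcal{V}=S_{n-1}\oplus S_n$ and $\mathrm{pr}_{\mathcal{V}}=\pi_{n-1}+\pi_n$. *)

(* Fiberwise (pointwise) model of the spinor bundle of an
   almost Hermitian manifold of real dimension 2m, m = 2n. *)
From HB Require Import structures.
From mathcomp Require Import all_boot all_order all_algebra.
Set Implicit Arguments. Unset Strict Implicit. Unset Printing Implicit Defensive.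
Import Order.TTheory GRing.Theory Num.Theory.
Local Open Scope ring_scope.

Section Spin.
Variables (C : numClosedFieldType) (d N : nat).

Definition adj (A : 'M[C]_N) : 'M[C]_N := (map_mx Num.conj A)^T.

Definition real_vec (x : 'rV[C]_d) : Prop := forall k, x 0 k \is Num.real.
Definition real_mx (A : 'M[C]_d) : Prop := forall i j, A i j \is Num.real.

(* Euclidean metric g on the tangent space (standard basis is orthonormal) *)
Definition gmet (x y : 'rV[C]_d) : C := (x *m y^T) 0 0.

Definition Jv (J : 'M[C]_d) (x : 'rV[C]_d) : 'rV[C]_d := x *m J.

(* almost Hermitian: J real, J^2 = -1, g(JX,JY) = g(X,Y) *)
Definition almost_hermitian (J : 'M[C]_d) : Prop :=
  [/\ real_mx J, J *m J = - 1%:M & J *m J^T = 1%:M].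

(* Clifford multiplication by the (complexified) vector z, C-linearly
   extended from the standard orthonormal basis e_k |-> gam k *)
Definition cliff (gam : 'I_d -> 'M[C]_N) (z : 'rV[C]_d) : 'M[C]_N :=
  \sum_(k < d) z 0 k *: gam k.

Definition clifford_module (gam : 'I_d -> 'M[C]_N) : Prop :=
  (forall k l, gam k *m gam l + gam l *m gam k = - ((k == l)%:R *+ 2) *: 1%:M)
  /\ (forall k, adj (gam k) = - gam k).

Definition evec (k : 'I_d) : 'rV[C]_d := delta_mx 0 k.

Definition Omega (J : 'M[C]_d) (x y : 'rV[C]_d) : C := gmet x (Jv J y).
Definition gOmega (J : 'M[C]_d) (gam : 'I_d -> 'M[C]_N) : 'M[C]_N :=
  \sum_(i < d) \sum_(j < d | (i < j)%N) Omega J (evec i) (evec j) *: (gam i *m gam j).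

Definition x10 (J : 'M[C]_d) (x : 'rV[C]_d) : 'rV[C]_d := 2^-1 *: (x - 'i *: Jv J x).
Definition x01 (J : 'M[C]_d) (x : 'rV[C]_d) : 'rV[C]_d := 2^-1 *: (x + 'i *: Jv J x).

Definition orth_proj_eigen (A : 'M[C]_N) (lam : C) (P : 'M[C]_N) : Prop :=
  [/\ P *m P = P, adj P = P &
      forall v : 'cV[C]_N, P *m v = v <-> A *m v = lam *: v].

End Spin.

(* pi j = orthogonal projection onto S_j (eigenvalue i(m-2j) of gamma(Omega)),
   and pi j = 0 for j outside {0,..,m}; indices are integers *)
Definition spinor_projections (C : numClosedFieldType) (d N m : nat)
  (J : 'M[C]_d) (gam : 'I_d -> 'M[C]_N) (pi : int -> 'M[C]_N) : Prop :=
  forall j : int,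
    if (0 <= j) && (j <= m%:Z) then
      orth_proj_eigen (gOmega J gam) ('i * ((m%:Z - 2 * j)%:~R)) (pi j)
    else pi j = 0.

Section Ops.
Variables (C : numClosedFieldType) (m N : nat).
Local Notation d := (2 * m)%N.
Variables (J : 'M[C]_d) (gam : 'I_d -> 'M[C]_N) (pi : int -> 'M[C]_N) (n : int).

Definition alpha1 : C := sqrtC ((m%:R - 1) / (m%:R + 1)).
Definition beta1 : C := m%:R + 1 - (m%:R + 2) * alpha1.
Definition alpha2 : C := sqrtC ((m%:R + 1) / (m%:R - 1)).
Definition beta2 : C := m%:R + 1 - m%:R * alpha2.

Definition frakT (x : 'rV[C]_d) : 'M[C]_N :=
  'i *: (alpha1 *: (cliff gam (x10 J x) *m pi (n - 1))
       + alpha2 *: (cliff gam (x01 J x) *m pi n)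
       + beta1 *: (cliff gam (x10 J x) *m pi (n - 2))
       + beta2 *: (cliff gam (x01 J x) *m pi (n + 1))).

Definition calT : 'M[C]_N :=
  - ('i * (m%:R + 1)) *: 1%:M + ('i * beta1) *: pi (n - 1) + ('i * beta2) *: pi n.

End Ops.

(* The Clifford element A = gamma(Omega) is skew-adjoint and satisfies
   [A, X.] = -2 (JX)., so X^{1,0}. lowers its eigenvalue by 2i and X^{0,1}. raises it:
   X^{1,0}. maps S_j into S_{j+1} and X^{0,1}. maps S_{j+1} into S_j. No completeness of
   S_0 + ... + S_m is assumed; it suffices that i(m+2) is not an eigenvalue, which holds
   because A is i/2 times a sum of 2m self-adjoint involutions.
   For real X, (X^{1,0}.)^* = -X^{0,1}., so iX. and the operators
   i (X^{1,0}. pi_j + X^{0,1}. pi_{j+1}) are self-adjoint, and T_X + X.T is a real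
   combination of them precisely because alpha_1 + beta_1 = alpha_2 + beta_2.
   For the frame sum, sum_j e_j.e_j^{1,0}. = -m + iA and sum_j e_j.e_j^{0,1}. = -m - iA
   do not depend on the frame and act on S_k by 2(k - m) and -2k. *)

From HB Require Import structures.
From mathcomp Require Import all_boot all_order all_algebra.
From mathcomp Require Import ring zify.
Set Implicit Arguments. Unset Strict Implicit. Unset Printing Implicit Defensive.
Import Order.TTheory GRing.Theory Num.Theory.
Local Open Scope ring_scope.

Section Adjoint.
Variables (C : numClosedFieldType) (N : nat).
Implicit Types (A B U W : 'M[C]_N).

Lemma adj_is_zmod_morphism : zmod_morphism (@adj C N).
Proof. by move=> A B; apply/matrixP => i j; rewrite /adj !mxE rmorphB. Qed.
HB.instance Definition _ := GRing.isZmodMorphism.Build 'M[C]_N 'M[C]_N (@adj C N)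
  adj_is_zmod_morphism.

Lemma adj_scale c A : adj (c *: A) = c^* *: adj A.
Proof. by rewrite /adj map_mxZ linearZ. Qed.

Lemma adj_mul A B : adj (A *m B) = adj B *m adj A.
Proof. by rewrite /adj map_mxM trmx_mul. Qed.

Lemma adjK : involutive (@adj C N).
Proof. by move=> A; apply/matrixP => i j; rewrite /adj !mxE conjCK. Qed.

Lemma adj_mx1 : adj (1%:M : 'M[C]_N) = 1%:M.
Proof. by rewrite /adj map_mx1 trmx1. Qed.

Lemma adj_real_scale c A : c \is Num.real -> adj A = A -> adj (c *: A) = c *: A.
Proof. by move=> /conj_Creal cR AA; rewrite adj_scale cR AA. Qed.

Lemma mxtrace_adj_mul W : \tr (adj W *m W) = \sum_j \sum_k `|W k j| ^+ 2.
Proof.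
apply: eq_bigr => j _; rewrite mxE; apply: eq_bigr => k _.
by rewrite /adj !mxE normCK mulrC.
Qed.

Lemma mxtrace_adj_mul_ge0 W : 0 <= \tr (adj W *m W).
Proof. by rewrite mxtrace_adj_mul; do 2![apply: sumr_ge0 => ? _]; apply: exprn_ge0. Qed.

Lemma mxtrace_adj_mul_eq0 W : \tr (adj W *m W) = 0 -> W = 0.
Proof.
move/eqP; rewrite mxtrace_adj_mul psumr_eq0 => [/allP W0|j _]; last first.
  by apply: sumr_ge0 => ? _; apply: exprn_ge0.
apply/matrixP => k j; move/(_ j (mem_index_enum _)): W0.
rewrite psumr_eq0 => [/allP/(_ k (mem_index_enum _))|]; last by move=> ? _; apply: exprn_ge0.
by rewrite !mxE sqrf_eq0 normr_eq0 => /eqP.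
Qed.

Lemma mxtrace_sub_involution_ge0 U W :
  adj U = U -> U *m U = 1%:M -> 0 <= \tr (adj W *m ((1%:M - U) *m W)).
Proof.
move=> UU U2; have half1U : 1%:M - U = 2^-1 *: (adj (1%:M - U) *m (1%:M - U)).
  rewrite (raddfB (@adj C N)) /= adj_mx1 UU mulmxBl mul1mx mulmxBr mulmx1 U2 opprB.
  by rewrite -mulr2n -scaler_nat scalerA mulVf ?pnatr_eq0 ?scale1r.
rewrite half1U -scalemxAl -scalemxAr mxtraceZ -mulmxA (mulmxA (adj W)) -adj_mul.
by rewrite mulr_ge0 ?invr_ge0 ?ler0n ?mxtrace_adj_mul_ge0.
Qed.

Lemma adj_shift_pair (a b p q : 'M[C]_N) : adj a = - b -> adj p = p -> adj q = q ->
  q *m a = a *m p -> adj ('i *: (a *m p + b *m q)) = 'i *: (a *m p + b *m q).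
Proof.
move=> ab pp qq qa; have ba : adj b = - a by rewrite -[a]adjK ab raddfN /= opprK.
have pb : p *m b = b *m q.
  by have := congr1 (@adj C N) qa; rewrite !adj_mul ab pp qq mulmxN mulNmx => /oppr_inj.
rewrite adj_scale conjCi raddfD /= !adj_mul ab ba pp qq !mulmxN -opprD.
by rewrite scaleNr scalerN opprK pb qa addrC.
Qed.

End Adjoint.

Section Clifford.
Variables (C : numClosedFieldType) (d N : nat) (gam : 'I_d -> 'M[C]_N).
Local Notation cl := (cliff gam).

Lemma cliff_is_semilinear : semilinear cl.
Proof.
split=> [c x|x y]; rewrite /cliff; last first.
  by rewrite -big_split; apply: eq_bigr => k _; rewrite mxE scalerDl.
by rewrite scaler_sumr; apply: eq_bigr => k _; rewrite mxE scalerA.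
Qed.
HB.instance Definition _ := GRing.isSemilinear.Build C 'rV[C]_d 'M[C]_N _ cl
  cliff_is_semilinear.

Lemma cliff_delta k : cl (delta_mx 0 k) = gam k.
Proof.
rewrite /cliff (bigD1 k) //= big1 ?addr0 => [|l /negbTE nlk].
  by rewrite mxE !eqxx scale1r.
by rewrite mxE nlk andbF scale0r.
Qed.

Lemma cliff_mul_row (y : 'rV[C]_d) (K : 'M[C]_d) :
  cl (y *m K) = \sum_k y 0 k *: cl (row k K).
Proof. by rewrite mulmx_sum_row linear_sum; apply: eq_bigr => k _; rewrite linearZ. Qed.

Lemma gmetC (x y : 'rV[C]_d) : gmet x y = gmet y x.
Proof. by rewrite /gmet !mxE; apply: eq_bigr => k _; rewrite !mxE mulrC. Qed.

Lemma gmet_delta (y : 'rV[C]_d) k : gmet y (delta_mx 0 k) = y 0 k.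
Proof. by rewrite /gmet trmx_delta -(colE k y) mxE. Qed.

Lemma sum_frame_cliff (P K : 'M[C]_d) : P^T *m P = 1%:M ->
  \sum_j cl (row j P) *m cl (row j P *m K) = \sum_k gam k *m cl (row k K).
Proof.
move=> PtP.
have orthP k l : \sum_j P j k * P j l = (k == l)%:R.
  have := congr1 (fun M : 'M[C]_d => M k l) PtP; rewrite !mxE => <-.
  by apply: eq_bigr => j _; rewrite mxE.
have termE j : cl (row j P) *m cl (row j P *m K)
    = \sum_k \sum_l (P j k * P j l) *: (gam k *m cl (row l K)).
  rewrite cliff_mul_row {1}/cliff mulmx_suml; apply: eq_bigr => k _.
  rewrite mulmx_sumr; apply: eq_bigr => l _.
  by rewrite !mxE -scalemxAl -scalemxAr scalerA.
under eq_bigr do rewrite termE.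
rewrite exchange_big; apply: eq_bigr => k _ /=.
rewrite exchange_big /= (bigD1 k) //= [X in _ + X]big1 ?addr0 => [|l nlk].
  by rewrite -scaler_suml orthP eqxx scale1r.
by rewrite -scaler_suml orthP eq_sym (negbTE nlk) scale0r.
Qed.

Hypothesis cliffM : clifford_module gam.

Lemma cliff_anti x y : cl x *m cl y + cl y *m cl x = (- 2 * gmet x y) *: 1%:M.
Proof.
have [gam_anti _] := cliffM.
have prodE u v : cl u *m cl v = \sum_k \sum_l (u 0 k * v 0 l) *: (gam k *m gam l).
  rewrite {1 2}/cliff mulmx_suml; apply: eq_bigr => k _.
  by rewrite mulmx_sumr; apply: eq_bigr => l _; rewrite -scalemxAl -scalemxAr scalerA.
rewrite !prodE (exchange_big _ _ _ _ _ (fun k l => (y 0 k * x 0 l) *: _)) /=.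
rewrite -big_split /= /gmet mxE mulr_sumr scaler_suml.
apply: eq_bigr => k _; rewrite -big_split /= (bigD1 k) //= big1 ?addr0 => [|l /negbTE nlk].
  rewrite [y 0 k * _]mulrC -scalerDr gam_anti eqxx scalerA !mxE.
  by congr (_ *: _); rewrite mulr1n; ring.
by rewrite [y 0 l * _]mulrC -scalerDr gam_anti eq_sym nlk mul0rn oppr0 scale0r scaler0.
Qed.

Lemma cliff_sq x : cl x *m cl x = - gmet x x *: 1%:M.
Proof.
apply: (@scalerI _ _ 2%:R); first by rewrite pnatr_eq0.
by rewrite scaler_nat mulr2n cliff_anti scalerA; congr (_ *: _); ring.
Qed.

Lemma cliff_anti_orth x y : gmet x y = 0 -> cl y *m cl x = - (cl x *m cl y).
Proof. by move=> xy; apply/eqP; rewrite -addr_eq0 cliff_anti gmetC xy mulr0 scale0r. Qed.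

Lemma gam_sq k : gam k *m gam k = - 1%:M.
Proof. by rewrite -cliff_delta cliff_sq gmet_delta mxE !eqxx scaleN1r. Qed.

Lemma adj_cliff x : adj (cl x) = - cl (map_mx Num.conj x).
Proof.
rewrite /cliff raddf_sum /= -sumrN; apply: eq_bigr => k _.
by rewrite adj_scale (proj2 cliffM) scalerN mxE.
Qed.

Lemma cliff_comm_mul u v y :
  cl u *m cl v *m cl y - cl y *m (cl u *m cl v)
  = (- 2 * gmet v y) *: cl u + (2 * gmet u y) *: cl v.
Proof.
have vy : cl v *m cl y = (- 2 * gmet v y) *: 1%:M - cl y *m cl v.
  by rewrite -cliff_anti addrK.
have yu : cl y *m cl u = (- 2 * gmet u y) *: 1%:M - cl u *m cl y.
  by rewrite gmetC -cliff_anti addrK.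
rewrite -mulmxA vy mulmxA yu mulmxBr mulmxBl -!scalemxAr -!scalemxAl mulmx1 mul1mx.
by rewrite !mulmxA opprB addrA subrK !mulNr !scaleNr opprK.
Qed.

End Clifford.

Section AlmostHermitian.
Variables (C : numClosedFieldType) (d N : nat) (gam : 'I_d -> 'M[C]_N) (J : 'M[C]_d).
Hypotheses (cliffM : clifford_module gam) (hJ : almost_hermitian J).
Local Notation cl := (cliff gam).
Local Notation A := (gOmega J gam).

Lemma trmx_J : J^T = - J.
Proof.
have [_ JJ JJt] := hJ.
by rewrite -[J^T]mul1mx -[1%:M]opprK -JJ mulNmx -mulmxA JJt mulmx1.
Qed.

Lemma J_skew i j : J j i = - J i j.
Proof. by have := congr1 (fun M : 'M[C]_d => M i j) trmx_J; rewrite !mxE. Qed.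

Lemma J_diag k : J k k = 0.
Proof.
have /eqP := J_skew k k.
by rewrite -subr_eq0 opprK -mulr2n -mulr_natl mulf_eq0 pnatr_eq0 => /eqP.
Qed.

Lemma conj_rowJ k : map_mx Num.conj (row k J) = row k J.
Proof. by have [Jreal _ _] := hJ; apply/matrixP => i j; rewrite !mxE conj_Creal. Qed.

Lemma Omega_evec i j : Omega J (evec C i) (evec C j) = - J i j.
Proof. by rewrite /Omega /Jv /evec gmetC -rowE gmet_delta mxE (J_skew i j). Qed.

Lemma gmet_rowJ k : gmet (row k J) (row k J) = 1.
Proof.
have [_ _ JJt] := hJ; rewrite /gmet mxE.
have := congr1 (fun M : 'M[C]_d => M k k) JJt; rewrite !mxE eqxx mulr1n => <-.
by apply: eq_bigr => l _; rewrite !mxE.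
Qed.

Lemma cliff_rowJ_anti k : cl (row k J) *m gam k = - (gam k *m cl (row k J)).
Proof. by rewrite -cliff_delta cliff_anti_orth // gmetC gmet_delta mxE J_diag. Qed.

Lemma gOmega_sum : A = - 2^-1 *: \sum_k gam k *m cl (row k J).
Proof.
pose F i j := J i j *: (gam i *m gam j).
pose upper := \sum_(i < d) \sum_(j < d) (if (i < j)%N then F i j else 0).
have Fsym i j : F j i = F i j.
  have [-> //|ij] := eqVneq i j.
  have [gam_anti _] := cliffM; have := gam_anti j i.
  rewrite eq_sym (negbTE ij) mul0rn oppr0 scale0r => /eqP; rewrite addr_eq0 => /eqP.
  by rewrite /F (J_skew i j) => ->; rewrite scalerN scaleNr opprK.
have -> : \sum_k gam k *m cl (row k J) = upper + upper.
  rewrite {2}/upper exchange_big -big_split /=; apply: eq_bigr => i _.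
  rewrite /cliff mulmx_sumr -big_split; apply: eq_bigr => j _ /=.
  rewrite mxE -scalemxAr -/(F i j) Fsym.
  case: ltngtP => [||/val_inj ->]; rewrite ?addr0 ?add0r //.
  by rewrite /F J_diag scale0r.
rewrite -mulr2n -scaler_nat scalerA mulNr mulVf ?pnatr_eq0 // scaleN1r /gOmega -sumrN.
apply: eq_bigr => i _; rewrite big_mkcond -sumrN; apply: eq_bigr => j _ /=.
by case: ifP => _; rewrite ?oppr0 // Omega_evec scaleNr.
Qed.

Lemma sum_gam_cliff_rowJ : \sum_k gam k *m cl (row k J) = - 2%:R *: A.
Proof. by rewrite gOmega_sum scalerA mulrNN divff ?pnatr_eq0 ?scale1r. Qed.

Lemma adj_gOmega : adj A = - A.
Proof.
rewrite gOmega_sum adj_scale raddf_sum /= -scalerN -sumrN; congr (_ *: _).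
  by rewrite conj_Creal // rpredN rpredV realn.
apply: eq_bigr => k _.
by rewrite adj_mul adj_cliff // conj_rowJ (proj2 cliffM) mulmxN mulNmx opprK cliff_rowJ_anti.
Qed.

Lemma gOmega_cliff_comm y : A *m cl y - cl y *m A = - 2%:R *: cl (y *m J).
Proof.
have termE k : gam k *m cl (row k J) *m cl y - cl y *m (gam k *m cl (row k J))
    = (-2) *: (gmet (row k J) y *: gam k) + 2 *: (y 0 k *: cl (row k J)).
  rewrite -cliff_delta (cliff_comm_mul cliffM) (gmetC (delta_mx 0 k)) gmet_delta.
  by rewrite !scalerA.
have yJt : \sum_k gmet (row k J) y *: gam k = cl (y *m J^T).
  rewrite /cliff; apply: eq_bigr => k _.
  by rewrite gmetC /gmet !mxE; congr (_ *: _); apply: eq_bigr => l _; rewrite !mxE.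
rewrite gOmega_sum -scalemxAl -scalemxAr -scalerBr mulmx_suml mulmx_sumr -sumrB.
under eq_bigr do rewrite termE.
rewrite big_split /= -!scaler_sumr yJt trmx_J mulmxN linearN -cliff_mul_row.
rewrite scalerN -scaleNr -scalerDl scalerA.
by congr (_ *: _); field.
Qed.

Lemma sum_frame_sq (P : 'M[C]_d) : P^T *m P = 1%:M ->
  \sum_j cl (row j P) *m cl (row j P) = - d%:R *: 1%:M.
Proof.
move=> PtP; transitivity (\sum_j cl (row j P) *m cl (row j P *m 1%:M)).
  by apply: eq_bigr => j _; rewrite mulmx1.
rewrite sum_frame_cliff //.
under eq_bigr do rewrite row1 cliff_delta gam_sq //.
by rewrite sumrN sumr_const card_ord scaleNr scaler_nat.
Qed.

Lemma sum_frame_J (P : 'M[C]_d) : P^T *m P = 1%:M ->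
  \sum_j cl (row j P) *m cl (row j P *m J) = - 2%:R *: A.
Proof. by move=> PtP; rewrite sum_frame_cliff // sum_gam_cliff_rowJ. Qed.

(* [A = (i/2) sum_k U_k] with self-adjoint involutions [U_k = i e_k.(e_k J).], so
   [1 - U_k >= 0] bounds the eigenvalues of [-iA] by [d/2]. *)
Lemma gOmega_eig_bound (W : 'M[C]_N) (c : C) :
  A *m W = ('i * c) *: W -> d%:R < 2 * c -> W = 0.
Proof.
move=> AW dc; pose U k := 'i *: (gam k *m cl (row k J)).
have adjU k : adj (U k) = U k.
  rewrite adj_scale conjCi adj_mul adj_cliff // conj_rowJ (proj2 cliffM).
  by rewrite mulmxN mulNmx opprK cliff_rowJ_anti scaleNr scalerN opprK.
have U2 k : U k *m U k = 1%:M.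
  rewrite -scalemxAl -scalemxAr scalerA mulCii mulmxA -(mulmxA _ _ (gam k)).
  rewrite cliff_rowJ_anti mulmxN mulmxA gam_sq // !mulNmx mul1mx opprK cliff_sq //.
  by rewrite gmet_rowJ !scaleN1r opprK.
have sumU : \sum_k U k = ('i * - 2%:R) *: A.
  by rewrite -scaler_sumr sum_gam_cliff_rowJ scalerA.
have trE : \sum_k \tr (adj W *m ((1%:M - U k) *m W))
    = (d%:R - 2 * c) * \tr (adj W *m W).
  rewrite -raddf_sum -mulmx_sumr -mulmx_suml sumrB sumr_const card_ord sumU /=.
  rewrite mulmxBl -scalemxAl AW scalerA -scaler_nat -scalemxAl mul1mx -scalerBl.
  by rewrite -scalemxAr mxtraceZ; congr (_ * _); rewrite mulrCA !mulrA mulCii; ring.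
have : 0 <= (d%:R - 2 * c) * \tr (adj W *m W).
  by rewrite -trE; apply: sumr_ge0 => k _; apply: mxtrace_sub_involution_ge0.
rewrite nmulr_rge0 ?subr_lt0 // => tr_le0; apply: mxtrace_adj_mul_eq0.
by apply/eqP; rewrite eq_le tr_le0 mxtrace_adj_mul_ge0.
Qed.

End AlmostHermitian.

Section TypeDecomposition.
Variables (C : numClosedFieldType) (d : nat) (J : 'M[C]_d).
Hypothesis hJ : almost_hermitian J.
Implicit Types x : 'rV[C]_d.

Lemma x10_mulJ x : x10 J x *m J = 'i *: x10 J x.
Proof.
have [_ JJ _] := hJ.
rewrite /x10 /Jv -scalemxAl mulmxBl -scalemxAl -mulmxA JJ mulmxN mulmx1.
rewrite scalerA mulrC -scalerA; congr (_ *: _).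
by rewrite scalerN opprK scalerBr scalerA mulCii scaleN1r opprK addrC.
Qed.

Lemma x01_mulJ x : x01 J x *m J = - 'i *: x01 J x.
Proof.
have [_ JJ _] := hJ.
rewrite /x01 /Jv -scalemxAl mulmxDl -scalemxAl -mulmxA JJ mulmxN mulmx1.
rewrite scalerA mulrC -scalerA; congr (_ *: _).
by rewrite scalerDr scalerA mulNr mulCii opprK scale1r scaleNr scalerN addrC.
Qed.

Lemma x10_add_x01 x : x10 J x + x01 J x = x.
Proof.
rewrite /x10 /x01 -scalerDr addrACA addNr addr0 -mulr2n -scaler_nat scalerA.
by rewrite mulVf ?pnatr_eq0 ?scale1r.
Qed.

Lemma conj_x10 x : real_vec x -> map_mx Num.conj (x10 J x) = x01 J x.
Proof.
move=> x_real; have [J_real _ _] := hJ; apply/matrixP => i j; rewrite !mxE.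
have xr l : (x i l)^* = x i l by rewrite (ord1 i) conj_Creal.
have xJr : (\sum_l x i l * J l j)^* = \sum_l x i l * J l j.
  by rewrite rmorph_sum; apply: eq_bigr => l _; rewrite rmorphM /= xr conj_Creal.
by rewrite rmorphM rmorphB rmorphM /= conjCi fmorphV /= rmorph_nat xr xJr; ring.
Qed.

End TypeDecomposition.

Section OrthProjEigen.
Variables (C : numClosedFieldType) (N : nat) (A P : 'M[C]_N) (lam : C).
Hypothesis PA : orth_proj_eigen A lam P.

Lemma orth_proj_eigen_eig : A *m P = lam *: P.
Proof.
have [PP _ eigP] := PA; apply/matrixP => r s.
have Pcol : P *m col s P = col s P by rewrite !colE mulmxA PP.
have := congr1 (fun v : 'cV[C]_N => v r 0) ((eigP (col s P)).1 Pcol).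
by rewrite !colE mulmxA -!colE !mxE.
Qed.

Lemma orth_proj_eigen_fix (W : 'M[C]_N) : A *m W = lam *: W -> P *m W = W.
Proof.
have [_ _ eigP] := PA; move=> AW; apply/matrixP => r s.
have Acol : A *m col s W = lam *: col s W by rewrite !colE mulmxA AW scalemxAl.
have := congr1 (fun v : 'cV[C]_N => v r 0) ((eigP (col s W)).2 Acol).
by rewrite !colE mulmxA -!colE !mxE.
Qed.

End OrthProjEigen.

Section Spectral.
Variables (C : numClosedFieldType) (m N : nat).
Local Notation d := (2 * m)%N.
Variables (J : 'M[C]_d) (gam : 'I_d -> 'M[C]_N) (pi : int -> 'M[C]_N).
Hypotheses (cliffM : clifford_module gam) (hJ : almost_hermitian J).
Hypothesis hpi : spinor_projections m J gam pi.
Local Notation cl := (cliff gam).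
Local Notation A := (gOmega J gam).

Definition eigval (j : int) : C := 'i * (m%:Z - 2 * j)%:~R.

Lemma eigvalS j : eigval (j + 1) = eigval j - 2%:R * 'i.
Proof. by rewrite /eigval; ring. Qed.

Lemma pi_eq0 j : (j < 0) || (m%:Z < j) -> pi j = 0.
Proof.
move=> j_out; have := hpi j; case: ifP => [/andP[j_ge0 j_le] _|_ //].
by move: j_out; rewrite ltNge j_ge0 ltNge j_le.
Qed.

Lemma pi_eig j : A *m pi j = eigval j *: pi j.
Proof.
have := hpi j; case: ifP => _; first exact: orth_proj_eigen_eig.
by move=> ->; rewrite mulmx0 scaler0.
Qed.

Lemma adj_pi j : adj (pi j) = pi j.
Proof. by have := hpi j; case: ifP => [_ [_ -> _]|_ ->] //; rewrite raddf0. Qed.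

Lemma pi_idem j : pi j *m pi j = pi j.
Proof. by have := hpi j; case: ifP => [_ [-> _ _]|_ ->] //; rewrite mulmx0. Qed.

Lemma pi_eig_left j : pi j *m A = eigval j *: pi j.
Proof.
have := congr1 (@adj C N) (pi_eig j); rewrite adj_mul adj_scale adj_pi adj_gOmega //.
by rewrite /eigval rmorphM /= conjCi rmorph_int mulmxN mulNr scaleNr => /oppr_inj.
Qed.

Lemma pi_orth i j : i != j -> pi i *m pi j = 0.
Proof.
move=> ij; have : eigval i *: (pi i *m pi j) = eigval j *: (pi i *m pi j).
  by rewrite scalemxAl -pi_eig_left -mulmxA pi_eig -scalemxAr.
move/eqP; rewrite -subr_eq0 -scalerBl scaler_eq0 subr_eq0 => /orP[|/eqP //].
rewrite /eigval => /eqP/(mulfI (neq0Ci C))/intr_inj eq_ij.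
by move/eqP: ij; lia.
Qed.

(* For [j = -1] the eigenvalue [i(m+2)] does not occur at all. *)
Lemma pi_fix j (W : 'M[C]_N) :
  -1 <= j <= m%:Z -> A *m W = eigval j *: W -> pi j *m W = W.
Proof.
move=> /andP[j_ge j_le] AW; have [j_eq|j_neq] := eqVneq j (-1).
  have eig_m1 : eigval (-1) = 'i * (m + 2)%:R by rewrite /eigval; ring.
  rewrite j_eq eig_m1 in AW; rewrite j_eq pi_eq0 // mul0mx.
  by apply/esym/(gOmega_eig_bound cliffM hJ AW); rewrite -natrM ltr_nat; lia.
have := hpi j; rewrite ifT; last by apply/andP; split => //; lia.
by move/orth_proj_eigen_fix; apply.
Qed.

Lemma sum_frame_pi (P : 'M[C]_d) (c : C) k : P^T *m P = 1%:M ->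
  (\sum_j cl (row j P) *m cl (2^-1 *: (row j P + c *: (row j P *m J)))) *m pi k
  = (- m%:R - c * eigval k) *: pi k.
Proof.
move=> PtP.
under eq_bigr do rewrite !linearZ /= !linearD /= !linearZ /=.
rewrite big_split /= -!scaler_sumr sum_frame_sq // sum_frame_J //.
rewrite mulmxDl -!scalemxAl mul1mx pi_eig !scalerA -scalerDl.
by congr (_ *: _); rewrite natrM; field.
Qed.

Lemma sum_frame_x10_pi (P : 'M[C]_d) k : P^T *m P = 1%:M ->
  (\sum_j cl (row j P) *m cl (x10 J (row j P))) *m pi k = (2 * (k - m%:Z))%:~R *: pi k.
Proof.
move=> PtP; under eq_bigr do rewrite /x10 /Jv -scaleNr.
rewrite sum_frame_pi //; congr (_ *: _).
by rewrite /eigval mulNr mulrA mulCii; ring.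
Qed.

Lemma sum_frame_x01_pi (P : 'M[C]_d) k : P^T *m P = 1%:M ->
  (\sum_j cl (row j P) *m cl (x01 J (row j P))) *m pi k = (- 2 * k)%:~R *: pi k.
Proof.
move=> PtP; under eq_bigr do rewrite /x01 /Jv.
rewrite sum_frame_pi //; congr (_ *: _).
by rewrite /eigval mulrA mulCii; ring.
Qed.

Variable x : 'rV[C]_d.
Local Notation a := (cl (x10 J x)).
Local Notation b := (cl (x01 J x)).

Lemma gOmega_cliff_x10 : A *m a = a *m A - (2%:R * 'i) *: a.
Proof.
have comm := gOmega_cliff_comm cliffM hJ (x10 J x).
rewrite x10_mulJ // [cl ('i *: _)]linearZ /= in comm.
by rewrite -[A *m a](subrK (a *m A)) comm addrC scalerA mulNr scaleNr.
Qed.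

Lemma gOmega_cliff_x01 : A *m b = b *m A + (2%:R * 'i) *: b.
Proof.
have comm := gOmega_cliff_comm cliffM hJ (x01 J x).
rewrite x01_mulJ // [cl (- 'i *: _)]linearZ /= in comm.
by rewrite -[A *m b](subrK (b *m A)) comm addrC scalerA mulrNN.
Qed.

Lemma cliff_x10_pi_eig k : A *m (a *m pi k) = eigval (k + 1) *: (a *m pi k).
Proof.
rewrite mulmxA gOmega_cliff_x10 mulmxBl -mulmxA pi_eig -scalemxAr -scalemxAl.
by rewrite -scalerBl eigvalS.
Qed.

Lemma cliff_x01_pi_eig k : A *m (b *m pi (k + 1)) = eigval k *: (b *m pi (k + 1)).
Proof.
rewrite mulmxA gOmega_cliff_x01 mulmxDl -mulmxA pi_eig -scalemxAr -scalemxAl.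
by rewrite -scalerDl eigvalS subrK.
Qed.

Hypothesis x_real : real_vec x.

Lemma adj_cliff_x10 : adj a = - b.
Proof. by rewrite adj_cliff // conj_x10. Qed.

Lemma adj_cliff_x01 : adj b = - a.
Proof. by rewrite -[b]opprK -adj_cliff_x10 raddfN /= adjK. Qed.

(* [a] maps [S_j] into [S_{j+1}] and [b = - adj a] maps [S_{j+1}] into [S_j]. *)
Lemma pi_cliff_x10 j : -1 <= j -> j < m%:Z -> pi (j + 1) *m a = a *m pi j.
Proof.
move=> j_ge j_lt.
have into_next : pi (j + 1) *m (a *m pi j) = a *m pi j.
  by apply: pi_fix; [apply/andP; split; lia | exact: cliff_x10_pi_eig].
have into_prev : pi j *m (b *m pi (j + 1)) = b *m pi (j + 1).
  by apply: pi_fix; [apply/andP; split; lia | exact: cliff_x01_pi_eig].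
have := congr1 (@adj C N) into_prev.
rewrite !adj_mul !adj_pi adj_cliff_x01 mulmxN mulNmx => /oppr_inj <-.
by rewrite -mulmxA into_next.
Qed.

End Spectral.

Section Coefficients.
Variables (C : numClosedFieldType) (m : nat).
Hypothesis m_gt1 : (1 < m)%N.

Let m_sub1_gt0 : 0 < m%:R - 1 :> C.
Proof. by rewrite subr_gt0 ltr1n. Qed.

Let m_add1_gt0 : 0 < m%:R + 1 :> C.
Proof. by rewrite ltr_wpDl. Qed.

Lemma alpha1_ge0 : 0 <= alpha1 C m.
Proof. by rewrite sqrtC_ge0 divr_ge0 ?ltW. Qed.

Lemma alpha2_ge0 : 0 <= alpha2 C m.
Proof. by rewrite sqrtC_ge0 divr_ge0 ?ltW. Qed.

Lemma beta1_real : beta1 C m \is Num.real.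
Proof. by rewrite /beta1 !(rpredB, rpredD, rpredM, realn, real1) ?ger0_real ?alpha1_ge0. Qed.

Lemma beta2_real : beta2 C m \is Num.real.
Proof. by rewrite /beta2 !(rpredB, rpredD, rpredM, realn, real1) ?ger0_real ?alpha2_ge0. Qed.

(* Both sides equal [m + 1 - sqrt (m^2 - 1)]. *)
Lemma alpha_beta_sum : alpha1 C m + beta1 C m = alpha2 C m + beta2 C m.
Proof.
have key : (m%:R + 1) * alpha1 C m = (m%:R - 1) * alpha2 C m.
  apply/eqP; rewrite -(@eqrXn2 _ 2) ?mulr_ge0 ?alpha1_ge0 ?alpha2_ge0 ?ltW //.
  rewrite !exprMn !sqrtCK; apply/eqP; field.
  by rewrite !lt0r_neq0.
apply/eqP; rewrite -subr_eq0 /beta1 /beta2; apply/eqP.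
transitivity ((m%:R - 1) * alpha2 C m - (m%:R + 1) * alpha1 C m); first ring.
by rewrite key subrr.
Qed.

End Coefficients.

Section Main.
Variables (C : numClosedFieldType) (n N : nat).
Local Notation m := (2 * n)%N.
Variables (J : 'M[C]_(2 * m)) (gam : 'I_(2 * m) -> 'M[C]_N) (pi : int -> 'M[C]_N).
Hypotheses (n_gt0 : (1 <= n)%N) (hJ : almost_hermitian J) (cliffM : clifford_module gam).
Hypothesis hpi : spinor_projections m J gam pi.
Local Notation cl := (cliff gam).
Local Notation a1 := (alpha1 C m).
Local Notation a2 := (alpha2 C m).
Local Notation b1 := (beta1 C m).
Local Notation b2 := (beta2 C m).

Lemma frakT_calT_selfadjoint x : real_vec x ->
  adj (frakT J gam pi n%:Z x + cl x *m calT m pi n%:Z)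
  = frakT J gam pi n%:Z x + cl x *m calT m pi n%:Z.
Proof.
move=> x_real; set a := cl (x10 J x); set b := cl (x01 J x).
pose H (p q : 'M[C]_N) := 'i *: (a *m p + b *m q).
have adjH c p q : c \is Num.real -> adj p = p -> adj q = q -> q *m a = a *m p ->
    adj (c *: H p q) = c *: H p q.
  by move=> cR *; apply/adj_real_scale/adj_shift_pair => //; apply: adj_cliff_x10.
have m_gt1 : (1 < m)%N by lia.
have -> : frakT J gam pi n%:Z x + cl x *m calT m pi n%:Z
    = - (m%:R + 1) *: H 1%:M 1%:M + (a1 + b1) *: H (pi (n%:Z - 1)) (pi n%:Z)
      + b1 *: H (pi (n%:Z - 2)) (pi (n%:Z - 1)) + b2 *: H (pi n%:Z) (pi (n%:Z + 1)).
  have a2E : a2 = a1 + b1 - b2 by rewrite alpha_beta_sum // addrK.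
  rewrite /frakT /calT -[in cl x](x10_add_x01 J x) [cl (_ + _)]linearD /= -/a -/b.
  rewrite /H a2E.
  rewrite !mulmxDl !mulmxDr -!scalemxAr !mulmx1.
  move: (a *m _) (a *m _) (a *m _) (b *m _) (b *m _) (b *m _) => A0 A1 A2 B1 B2 B3.
  by apply/matrixP => r s; rewrite !mxE; ring.
have shift (j : int) : -1 <= j -> j < m%:Z -> pi (j + 1) *m a = a *m pi j.
  exact: (pi_cliff_x10 cliffM hJ hpi x_real).
have shift0 : pi (n%:Z - 1) *m a = a *m pi (n%:Z - 2).
  by rewrite (_ : n%:Z - 1 = n%:Z - 2 + 1) ?shift //; lia.
have shift1 : pi n%:Z *m a = a *m pi (n%:Z - 1).
  by rewrite -{1}(subrK 1 n%:Z) shift //; lia.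
have shift2 : pi (n%:Z + 1) *m a = a *m pi n%:Z by rewrite shift //; lia.
have a1b1_real : a1 + b1 \is Num.real by rewrite rpredD ?beta1_real ?ger0_real ?alpha1_ge0.
by rewrite !(raddfD (@adj C N)) /= !adjH ?(adj_pi hpi) ?adj_mx1 ?mul1mx ?mulmx1
  ?a1b1_real ?(beta1_real _ m_gt1) ?(beta2_real _ m_gt1) ?rpredN ?rpredD ?realn ?real1.
Qed.

Lemma frakT_frame_sum (P : 'M[C]_(2 * m)) : P *m P^T = 1%:M ->
  \sum_(j < 2 * m) cl (row j P) *m frakT J gam pi n%:Z (row j P)
  = calT m pi n%:Z *m (pi (n%:Z - 1) + pi n%:Z)
    - ('i * b1 * (m%:R + 4)) *: pi (n%:Z - 2) - ('i * b2 * (m%:R + 2)) *: pi (n%:Z + 1).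
Proof.
move=> /mulmx1C PtP; rewrite /frakT.
under eq_bigr do rewrite -scalemxAr !mulmxDr -!scalemxAr !mulmxA.
rewrite -scaler_sumr !big_split /= -!scaler_sumr -!mulmx_suml.
rewrite !(sum_frame_x10_pi cliffM hJ hpi) // !(sum_frame_x01_pi cliffM hJ hpi) //.
have pi_orth_n1 : pi (n%:Z - 1) *m pi n%:Z = 0 by apply: (pi_orth cliffM hJ hpi); lia.
have pi_orth_n2 : pi n%:Z *m pi (n%:Z - 1) = 0 by apply: (pi_orth cliffM hJ hpi); lia.
rewrite /calT !mulmxDl !mulmxDr -!scalemxAl !mul1mx !(pi_idem hpi).
rewrite pi_orth_n1 pi_orth_n2 !scaler0 !addr0.
move: (pi (n%:Z - 2)) (pi (n%:Z - 1)) (pi n%:Z) (pi (n%:Z + 1)) => q0 q1 q2 q3.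
by apply/matrixP => r s; rewrite !mxE /beta1 /beta2; ring.
Qed.

End Main.

Unset Implicit Arguments.

Theorem mainTheorem5 (C : numClosedFieldType) (n N : nat)
  (J : 'M[C]_(2 * (2 * n))) (gam : 'I_(2 * (2 * n)) -> 'M[C]_N)
  (pi : int -> 'M[C]_N) :
  (1 <= n)%N ->
  almost_hermitian J ->
  clifford_module gam ->
  N = (2 ^ (2 * n))%N ->
  spinor_projections (2 * n) J gam pi ->
  (forall x : 'rV[C]_(2 * (2 * n)), real_vec x ->
     adj (frakT J gam pi n%:Z x + cliff gam x *m calT (2 * n) pi n%:Z)
     = frakT J gam pi n%:Z x + cliff gam x *m calT (2 * n) pi n%:Z)
  /\
  (forall P : 'M[C]_(2 * (2 * n)), real_mx P -> P *m P^T = 1%:M ->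
     \sum_(j < 2 * (2 * n)) cliff gam (row j P) *m frakT J gam pi n%:Z (row j P)
     = calT (2 * n) pi n%:Z *m (pi (n%:Z - 1) + pi n%:Z)
       - ('i * beta1 C (2 * n) * ((2 * n)%:R + 4)) *: pi (n%:Z - 2)
       - ('i * beta2 C (2 * n) * ((2 * n)%:R + 2)) *: pi (n%:Z + 1)).
Proof.
move=> n_gt0 hJ cliffM _ hpi; split.
  by move=> x; apply: frakT_calT_selfadjoint.
by move=> P _; apply: frakT_frame_sum.
Qed.
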